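(* Let $G$ be a group with identity $e$, $A$ a set with at least two elements, $\tau: A^G\to A^G$ a lazy cellular automaton, and $n\in\mathbb{Z}_+$. Then \[\mathrm{ord}(\tau) > n \iff \tau^{j-1}\neq \tau^{j} \text{ for all } j \in \{1, \ldots, n\}. \] Furthermore, $\mathrm{ord}(\tau) = \min\{n\geq 2: \tau^{n-1}=\tau^n\}$.
   Context: $A^G$ is the set of maps $G \to A$ with shift action $(g\cdot x)(h) := x(hg)$. A cellular automaton is a map $\tau : A^G \to A^G$ with a finite $S \subseteq G$ and $\mu : A^S \to A$ such that $\tau(x)(g) = \mu((g\cdot x)|_S)$. $\tau$ is lazy if there is such a local defining map $\mu : A^S \to A$ with $e \in S$ and $p \in A^S$ such that for all $z \in A^S$: $\mu(z) = z(e)$ iff $z \neq p$. $\tau^k$ is the $k$-fold composition, $\tau^0$ the identity; $\mathrm{ord}(\tau) := |\{\tau^k : k \in \mathbb{N}\}|$ with $\mathbb{N}=\{0,1,2,\dots\}$ (possibly infinite; the minimum of the empty set is read as $\infty$). *)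

From HB Require Import structures.
From mathcomp Require Import all_boot.
From mathcomp Require Import monoid.
From mathcomp Require Import boolp classical_sets cardinality.
Unset Printing Implicit Defensive.
Local Open Scope classical_set_scope.

Section CA.
Variables (G : groupType) (A : Type).

Definition shift (g : G) (x : G -> A) : G -> A := fun h => x (monoid.mul h g).

Definition restr (S : set G) (x : G -> A) : {s : G | S s} -> A :=
  fun s => x (proj1_sig s).

Definition local_defining_map (tau : (G -> A) -> (G -> A)) (S : set G)
  (mu : ({s : G | S s} -> A) -> A) : Prop :=
  forall (x : G -> A) (g : G), tau x g = mu (restr S (shift g x)).

Definition cellular_automaton (tau : (G -> A) -> (G -> A)) : Prop :=
  exists (S : set G) (mu : ({s : G | S s} -> A) -> A),
    finite_set S /\ local_defining_map tau S mu.

Definition lazy_ca (tau : (G -> A) -> (G -> A)) : Prop :=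
  exists (S : set G) (mu : ({s : G | S s} -> A) -> A) (he : S (monoid.one : G))
         (p : {s : G | S s} -> A),
    finite_set S /\ local_defining_map tau S mu /\
    forall z : {s : G | S s} -> A, mu z = z (exist _ (monoid.one : G) he) <-> z <> p.

End CA.
Arguments shift {G A}.
Arguments restr {G A}.
Arguments local_defining_map {G A}.
Arguments cellular_automaton {G A}.
Arguments lazy_ca {G A}.

Definition powers {T : Type} (tau : T -> T) : set (T -> T) :=
  [set iter k tau | k in [set: nat]].

(* ord(tau) := |{tau^k : k in N}| in N \cup {oo}; None encodes oo *)
Definition ord {T : Type} (tau : T -> T) : option nat :=
  match pselect (finite_set (powers tau)) with
  | left h => Some (projT1 (cid h))
  | right _ => None
  end.

Definition ext_gt (o : option nat) (n : nat) : Prop :=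
  match o with Some m => (n < m)%N | None => True end.

(* min of a set of naturals, with min of the empty set = oo (None) *)
Definition nat_min (P : nat -> Prop) : option nat :=
  match pselect (exists n, P n) with
  | left h => Some (ex_minn (let: ex_intro n hn := h in
                    ex_intro (fun n => `[< P n >]) n (asboolT hn)))
  | right _ => None
  end.

(* A lazy automaton changes a cell only where it sees the exceptional pattern
   p, and then writes mu p <> p(e); a cell holding mu p can never see p again,
   so it keeps mu p forever.  Hence a cell that changes once never returns to
   its value, so tau^k z = z with k > 0 forces tau z = z, and tau^i = tau^j
   with i < j forces tau^i = tau^(i+1).  The powers of tau are then pairwise
   distinct up to the first index n with tau^(n-1) = tau^n, and constant from
   there on; tau <> id rules out n = 1. *)

From HB Require Import structures.
From mathcomp Require Import all_boot.
From mathcomp Require Import monoid.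
From mathcomp Require Import boolp classical_sets cardinality.

Local Open Scope classical_set_scope.
Local Open Scope card_scope.

Variant nat_min_spec (P : nat -> Prop) : option nat -> Prop :=
  | NatMinSome N of P N & (forall m, P m -> (N <= m)%N) : nat_min_spec P (Some N)
  | NatMinNone of (forall m, ~ P m) : nat_min_spec P None.

Lemma nat_minP (P : nat -> Prop) : nat_min_spec P (nat_min P).
Proof.
rewrite /nat_min; case: pselect => [hex|hnex]; last first.
  by constructor=> m Pm; apply: hnex; exists m.
case: ex_minnP => N /asboolP PN minN.
by constructor=> // m /asboolP; apply: minN.
Qed.

Lemma ext_gt_nat_min (P : nat -> Prop) n :
  ext_gt (nat_min P) n <-> (forall m, (m <= n)%N -> ~ P m).
Proof.
case: nat_minP => [N PN minN|noP] /=; last by split.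
split=> [nN m mn Pm|H].
  by have := minN m Pm; rewrite leqNgt (leq_ltn_trans mn nN).
by rewrite ltnNge; apply/negP => Nn; exact: H N Nn PN.
Qed.

Section Powers.
Context {T : Type} {f : T -> T}.

Lemma ord_card N : powers f #= `I_N -> ord f = Some N.
Proof.
move=> hN; rewrite /ord; case: pselect => [h|h]; last by exfalso; apply: h; exists N.
case: (cid h) => m hm /=; congr Some; apply/esym/card_eq_II.
exact: card_eq_trans (card_esym hN) hm.
Qed.

Lemma ord_iter_inj : injective (fun k => iter k f) -> ord f = None.
Proof.
move=> inj; rewrite /ord; case: pselect => [/finite_setPn []|//].
have /card_esym : (fun k => iter k f) @` [set: nat] #= [set: nat].
  by apply: inj_card_eq => i j _ _; exact: inj.
by rewrite card_eq_le => /andP[].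
Qed.

Lemma iter_stationary N k : iter N f = iter N.+1 f -> (N <= k)%N ->
  iter k f = iter N f.
Proof.
move=> hN; elim: k => [|k IH]; first by rewrite leqn0 => /eqP ->.
rewrite leq_eqVlt => /orP[/eqP <- //|Nk].
by rewrite [RHS]hN; apply: funext => x /=; rewrite IH.
Qed.

Lemma powers_stationary N : iter N f = iter N.+1 f ->
  powers f = (fun k => iter k f) @` `I_N.+1.
Proof.
move=> hN; apply/seteqP; split=> _ [k _ <-]; last by exists k.
case: (ltnP k N.+1) => hk; first by exists k.
by exists N; rewrite /= ?ltnSn // (@iter_stationary N k hN) // ltnW.
Qed.

Hypothesis f_neq_id : f <> id.
Hypothesis iter_eq_step : forall {i j}, (i < j)%N -> iter i f = iter j f ->
  iter i f = iter i.+1 f.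

Let stationary_at m := (2 <= m)%N /\ iter m.-1 f = iter m f.

Lemma iter_inj_below N : (forall m, stationary_at m -> (N <= m)%N) ->
  {in `I_N &, injective (fun k => iter k f)}.
Proof.
have stat i j : (i < j)%N -> iter i f = iter j f -> stationary_at i.+1.
  move=> ij /(iter_eq_step ij) hi; split; last exact: hi.
  by case: i {ij} hi => // hi; case: f_neq_id; exact: esym hi.
move=> minN i j; rewrite !in_setE /= => iN jN hij.
case: (ltngtP i j) => // [ij|ji].
  by have := minN _ (stat _ _ ij hij); rewrite leqNgt (leq_ltn_trans ij jN).
by have := minN _ (stat _ _ ji (esym hij)); rewrite leqNgt (leq_ltn_trans ji iN).
Qed.

Lemma ord_nat_min : ord f = nat_min stationary_at.
Proof.
case: nat_minP => [N [N2 hN] minN|noP].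
  have N0 : (0 < N)%N := ltnW N2.
  apply: ord_card; rewrite (@powers_stationary N.-1) prednK //.
  by apply: inj_card_eq; exact: iter_inj_below.
apply: ord_iter_inj => i j.
apply: (@iter_inj_below (maxn i j).+1) => [m /noP //||];
  by rewrite in_setE /= ltnS ?leq_maxl ?leq_maxr.
Qed.

End Powers.

Section Lazy.
Context {G : groupType} {A : Type} {tau : (G -> A) -> (G -> A)}.
Context {S : set G} {mu : ({s : G | S s} -> A) -> A} {he : S (monoid.one : G)}
  {p : {s : G | S s} -> A}.
Hypothesis tau_mu : local_defining_map tau S mu.
Hypothesis mu_lazy : forall z : {s : G | S s} -> A,
  mu z = z (exist _ (monoid.one : G) he) <-> z <> p.

Let e := exist S (monoid.one : G) he.

Lemma restr_shift_e (x : G -> A) g : restr S (shift g x) e = x g.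
Proof. by rewrite /restr /shift /= mul1g. Qed.

Lemma mu_p_neq : mu p <> p e.
Proof. by move=> h; have /mu_lazy := h. Qed.

Lemma tau_neq (x : G -> A) g : tau x g <> x g -> x g = p e /\ tau x g = mu p.
Proof.
move=> h.
have hp : restr S (shift g x) = p.
  apply: contrapT => /mu_lazy hn; apply: h.
  by rewrite tau_mu hn restr_shift_e.
by rewrite tau_mu -(restr_shift_e x g) hp.
Qed.

Lemma tau_mu_p (x : G -> A) g : x g = mu p -> tau x g = mu p.
Proof.
move=> h; apply: contrapT => hn.
have [xg _] := @tau_neq x g ltac:(by rewrite h).
by apply: mu_p_neq; rewrite -xg.
Qed.

Lemma lazy_periodic_fixed (z : G -> A) k : (0 < k)%N -> iter k tau z = z ->
  tau z = z.
Proof.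
case: k => // k _ hk; apply: funext => g; apply: contrapT => /tau_neq [zg tzg].
have stays m : iter m.+1 tau z g = mu p.
  by elim: m => [|m IH] //=; exact: tau_mu_p.
by apply: mu_p_neq; rewrite -zg -(stays k) hk.
Qed.

Lemma lazy_iter_eq_step i j : (i < j)%N -> iter i tau = iter j tau ->
  iter i tau = iter i.+1 tau.
Proof.
move=> ij hij; apply: funext => x /=.
apply/esym/(@lazy_periodic_fixed _ (j - i)); first by rewrite subn_gt0.
by rewrite -iterD subnK ?(ltnW ij) // -hij.
Qed.

Lemma lazy_neq_id : tau <> id.
Proof.
pose x : G -> A := fun h =>
  if pselect (S h) is left hs then p (exist _ h hs) else p e.
have xp : restr S (shift monoid.one x) = p.
  apply: funext => -[s hs]; rewrite /restr /shift /= mulg1 /x.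
  case: pselect => [hs'|//].
  by congr p; congr exist; apply: Prop_irrelevance.
move=> h; have := congr1 (fun t => t x monoid.one) h => /=.
by rewrite tau_mu xp -(restr_shift_e x) xp; exact: mu_p_neq.
Qed.

End Lazy.

Theorem corollary2 (G : groupType) (A : Type) (tau : (G -> A) -> (G -> A)) :
  (exists a b : A, a <> b) ->
  lazy_ca tau ->
  (forall n : nat, (0 < n)%N ->
     (ext_gt (ord tau) n <->
      (forall j : nat, (1 <= j <= n)%N -> iter j.-1 tau <> iter j tau))) /\
  ord tau = nat_min (fun m => (2 <= m)%N /\ iter m.-1 tau = iter m tau).
Proof.
(* |A| >= 2 is implied by laziness, since mu p <> p(e). *)
move=> _ [S [mu [he [p [_ [tau_mu mu_lazy]]]]]].
have neq_id := lazy_neq_id tau_mu mu_lazy.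
have ord_min := ord_nat_min neq_id (lazy_iter_eq_step tau_mu mu_lazy).
split=> [n _|//]; rewrite ord_min ext_gt_nat_min; split.
  move=> H j /andP[j1 jn] hj; case: j j1 jn hj => [//|[_ _ /esym //|j _ jn hj]].
  exact: H jn (conj _ hj).
by move=> H m mn [m2 hm]; apply: H hm; rewrite (leq_trans _ m2).
Qed.
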